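(* Let $P$ be a finite poset, $\epsilon\in\{1,-1\}$ and $\xi\in S^{(\epsilon)}$ with $d=\xi(-\infty)>q^{(\epsilon)}\mathrm{dist}(-\infty,\infty)$. Then every $C\in C_\xi^{[d-\epsilon]}$ contains an element $z$ with $\xi(z)>\epsilon$.
   Context: $P^\pm=P\cup\{-\infty,\infty\}$, $-\infty<z<\infty$ for $z\in P$; $P^-=P\cup\{-\infty\}$. Saturated chain: $x=z_0\lessdot\cdots\lessdot z_t=y$, length $t$; $q^{(\epsilon)}\mathrm{dist}(x,y)=\max\{\epsilon t:$ saturated chain of length $t$ from $x$ to $y$ in $P^\pm\}$. $\xi^+(B)=\sum_{b\in B}\xi(b)$. $S^{(m)}=\{\xi\in\mathbb Z^{P^-}:\xi(x)\ge m\ \forall x\in P,\ \xi(-\infty)\ge\xi^+(C)+m$ for every maximal chain $C$\}; $C_\xi^{[m]}$ = maximal chains $C$ of $P$ with $\xi^+(C)=m$. *)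

From HB Require Import structures.
From mathcomp Require Import all_boot all_order all_algebra.
Set Implicit Arguments. Unset Strict Implicit. Unset Printing Implicit Defensive.
Import Order.TTheory GRing.Theory Num.Theory.

Local Open Scope order_scope.

Section Ext.
Context {disp : Order.disp_t} (P : finPOrderType disp).

Inductive ext := MInf | Elt of P | PInf.

Definition ext_enc (x : ext) : option (option P) :=
  match x with MInf => None | Elt a => Some (Some a) | PInf => Some None end.
Definition ext_dec (o : option (option P)) : ext :=
  match o with None => MInf | Some (Some a) => Elt a | Some None => PInf end.
Lemma ext_encK : cancel ext_enc ext_dec. Proof. by case. Qed.

HB.instance Definition _ := Finite.copy ext (can_type ext_encK).

Definition ext_le (x y : ext) : bool :=
  match x, y with
  | MInf, _ => true
  | _, PInf => true
  | Elt a, Elt b => (a <= b)%O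
  | _, _ => false
  end.
Definition ext_lt (x y : ext) : bool := (x != y) && ext_le x y.

Definition ext_cover (x y : ext) : bool :=
  ext_lt x y && [forall z, ~~ (ext_lt x z && ext_lt z y)].

Definition sat_chain (t : nat) (x y : ext) : bool :=
  [exists s : t.-tuple ext, path ext_cover x s && (last x s == y)].

(* lengths of saturated chains from x to y (a saturated chain of length t
   consists of t+1 distinct elements, so t < #|ext|) *)
Definition sat_lengths (x y : ext) : seq nat :=
  [seq t <- iota 0 #|{: ext}| | sat_chain t x y].

(* q^{(eps)}dist(x,y) = max { eps * t : saturated chain of length t from x to y } *)
Definition qdist (eps : int) (x y : ext) : int :=
  \big[Num.max/(eps * (head 0 (sat_lengths x y))%:Z)%R]_(t <- sat_lengths x y)
     (eps * t%:Z)%R.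

Definition is_chain (C : {set P}) : Prop :=
  forall x y, x \in C -> y \in C -> (x >=< y)%O.
Definition maximal_chain (C : {set P}) : Prop :=
  is_chain C /\ (forall D : {set P}, is_chain D -> C \subset D -> D = C).

(* P^- = P u {-oo}, with None standing for -oo *)
Definition Pminus := option P.

Definition xiplus (xi : Pminus -> int) (B : {set P}) : int :=
  (\sum_(b in B) xi (Some b))%R.

Definition inS (m : int) (xi : Pminus -> int) : Prop :=
  (forall x : P, (m <= xi (Some x))%R) /\
  (forall C : {set P}, maximal_chain C -> (xiplus xi C + m <= xi None)%R).

Definition C_xi (xi : Pminus -> int) (m : int) (C : {set P}) : Prop :=
  maximal_chain C /\ xiplus xi C = m.

End Ext.

From HB Require Import structures.
From mathcomp Require Import all_boot all_order all_algebra.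
From mathcomp Require Import zify.
Import Order.TTheory GRing.Theory Num.Theory.

(* Let C be a maximal chain with xi^+(C) = d - eps and suppose,
   for a contradiction, that xi(z) <= eps for every z in C.  Since xi is in
   S^(eps), xi(z) >= eps, so xi is constantly eps on C and d = eps (|C| + 1).
   Listing C increasingly and adding -oo and +oo gives a strictly increasing
   sequence of P^{+-}; maximality of C says that every element comparable to
   all its members already occurs in it, so consecutive members are covers:
   this is a saturated chain of length |C| + 1 from -oo to +oo.  Hence
   qdist^(eps)(-oo, +oo) >= eps (|C| + 1) = d, contradicting the hypothesis. *)

Section ExtendedOrder.
Context {disp : Order.disp_t} {P : finPOrderType disp}.
Local Notation E := (ext P).
Local Notation le := (@ext_le _ P).
Local Notation lt := (@ext_lt _ P).

Lemma ext_le_refl : reflexive le.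
Proof. by case=> //= a; rewrite lexx. Qed.

Lemma ext_le_trans : transitive le.
Proof. by case=> [|b|] [|a|] [|c|] //=; apply: le_trans. Qed.

Lemma ext_le_anti (x y : E) : le x y -> le y x -> x = y.
Proof.
by case: x; case: y => //= a b h1 h2; rewrite (@le_anti _ _ a b) ?h1 ?h2.
Qed.

Lemma ext_ltW {x y : E} : lt x y -> le x y.
Proof. by case/andP. Qed.

Lemma ext_lt_le_false {x y : E} : lt x y -> le y x -> False.
Proof. by case/andP=> /eqP nxy lxy lyx; apply: nxy; apply: ext_le_anti. Qed.

Lemma ext_lt_trans : transitive lt.
Proof.
move=> y x z /andP[_ lxy] lyz; apply/andP; split.
  by apply/eqP=> exz; subst z; apply: (ext_lt_le_false lyz).
exact: ext_le_trans _ _ _ lxy (ext_ltW lyz).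
Qed.

Lemma ext_lt_irr : irreflexive lt.
Proof. by move=> x; rewrite /ext_lt eqxx. Qed.

Lemma ext_lt_Elt (a b : P) : lt (Elt a) (Elt b) = (a < b)%O.
Proof.
by rewrite /ext_lt /= lt_neqAle; congr (_ && _); apply/eqP/eqP=> [[]|->].
Qed.

(* A strictly increasing sequence x :: s containing every element comparable
   to all of its members is a path of covering relations: nothing can be
   inserted between two consecutive members. *)
Lemma closed_sorted_cover_path (x : E) (s : seq E) :
  sorted lt (x :: s) ->
  (forall z, (forall w, w \in x :: s -> le z w || le w z) -> z \in x :: s) ->
  path (@ext_cover _ P) x s.
Proof.
move=> srt clo; apply/(pathP x) => i hi.
set l := x :: s.
have hle j k : (j <= k)%N -> (k < size l)%N -> le (nth x l j) (nth x l k).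
  move=> hjk hk; apply: (sorted_leq_nth ext_le_trans ext_le_refl) => //.
    by apply: sub_sorted srt => u v; apply: ext_ltW.
  by rewrite inE (leq_ltn_trans hjk hk).
have hlt : lt (nth x l i) (nth x l i.+1).
  by apply: (sorted_ltn_nth ext_lt_trans) => //; rewrite inE /=; lia.
rewrite /ext_cover hlt /=; apply/forallP => z; apply/negP => /andP[h1 h2].
have /(nthP x) [k hk ek] : z \in l.
  apply: clo => w /(nthP x) [k hk <-].
  case: (leqP k i) => hki.
    by rewrite (ext_le_trans _ _ _ (hle _ _ hki _) (ext_ltW h1)) ?orbT //=; lia.
  by rewrite (ext_le_trans _ _ _ (ext_ltW h2) (hle _ _ hki hk)).
rewrite -ek in h1 h2; case: (leqP k i) => hki.
  by apply: (ext_lt_le_false h1); apply: hle => //=; lia.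
by apply: (ext_lt_le_false h2); apply: (hle i.+1 k).
Qed.

(* A saturated chain of length t has t + 1 distinct elements, so t < |P^{+-}|;
   in particular every such t is listed in sat_lengths. *)
Lemma sat_chain_length_lt {t : nat} {x y : E} :
  sat_chain t x y -> (t < #|{: E}|)%N.
Proof.
case/existsP=> s /andP[hpath _].
have /card_uniqP hcard : uniq (x :: s).
  apply: (sorted_uniq ext_lt_trans ext_lt_irr).
  by apply: sub_path hpath => u v /andP[].
by have := max_card (mem (x :: s)); rewrite hcard /= size_tuple.
Qed.

Lemma qdist_ge_sat_chain (eps : int) {t : nat} {x y : E} :
  sat_chain t x y -> (eps * t%:Z <= qdist eps x y)%R.
Proof.
move=> ht; have hin : t \in sat_lengths x y.
  by rewrite mem_filter ht mem_iota add0n (sat_chain_length_lt ht).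
exact: (le_bigmax_seq _ _ xpredT (fun t : nat => eps * t%:Z)%R hin).
Qed.

(* A maximal chain contains every element comparable to all of its members,
   since adding such an element gives a larger chain. *)
Lemma maximal_chain_absorbs {C : {set P}} {a : P} :
  maximal_chain C -> (forall c, c \in C -> (a >=< c)%O) -> a \in C.
Proof.
move=> [hch hmax] hcmp.
have chD : is_chain (a |: C).
  move=> x y; rewrite !inE => /orP [/eqP ->|xC] /orP [/eqP ->|yC].
  - exact: comparablexx.
  - exact: hcmp.
  - by rewrite comparable_sym; apply: hcmp.
  - exact: hch.
by rewrite -(hmax _ chD (subsetUr _ _)) setU11.
Qed.

Lemma maximal_chain_sat_chain {C : {set P}} :
  maximal_chain C -> sat_chain #|C|.+1 (MInf P) (PInf P).
Proof.
move=> hC; have hch := hC.1.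
pose s := sort <=%O (enum C).
have memsC a : (a \in s) = (a \in C) by rewrite mem_sort mem_enum.
have sorted_s : sorted <%O s.
  rewrite lt_sorted_uniq_le sort_uniq enum_uniq /=.
  apply: (@sort_sorted_in _ (mem C)); first by move=> a b aC bC; apply: hch.
  by apply/allP => a; rewrite mem_enum.
pose tl := [seq Elt a | a <- s] ++ [:: PInf P].
have hsrt : sorted lt (MInf P :: tl).
  rewrite /= cat_path /= andbT; apply/andP; split.
    case: (s) sorted_s => [|a s'] //= hs.
    by rewrite path_map; apply: sub_path hs => u v; rewrite /= ext_lt_Elt.
  by case/lastP: (s) => [|s' a] //; rewrite map_rcons last_rcons.
have hclo z :
    (forall w, w \in MInf P :: tl -> le z w || le w z) -> z \in MInf P :: tl.
  case: z => [|a|] hw; rewrite ?inE ?eqxx // ?mem_cat ?inE ?eqxx ?orbT //.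
  rewrite map_f ?orbT // memsC; apply: (maximal_chain_absorbs hC) => c cC.
  by apply: (hw (Elt c)); rewrite inE mem_cat map_f ?orbT // memsC.
have hsize : size tl == #|C|.+1.
  by rewrite size_cat size_map size_sort -cardE addn1.
apply/existsP; exists (Tuple hsize).
by rewrite /= closed_sorted_cover_path //= /tl last_cat.
Qed.

End ExtendedOrder.

Lemma xiplus_const {disp : Order.disp_t} {P : finPOrderType disp}
    {xi : Pminus P -> int} {B : {set P}} {c : int} :
  (forall z, z \in B -> xi (Some z) = c) -> xiplus xi B = (c * #|B|%:Z)%R.
Proof.
move=> hc; rewrite /xiplus (eq_bigr (fun _ => c)) //.
by rewrite sumr_const -mulr_natr natz.
Qed.

Local Open Scope ring_scope.

Theorem mainTheorem14 (disp : Order.disp_t) (P : finPOrderType disp)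
  (eps : int) (heps : eps = 1 \/ eps = -1)
  (xi : Pminus P -> int) (hxi : inS eps xi)
  (hd : qdist eps (MInf P) (PInf P) < xi None) :
  forall C : {set P}, C_xi xi (xi None - eps) C ->
    exists2 z : P, z \in C & eps < xi (Some z).
Proof.
move=> C [hC hsum].
have [/exists_inP [z zC hz] | /exists_inPn hle] :=
  boolP [exists z in C, eps < xi (Some z)]; first by exists z.
have hconst z : z \in C -> xi (Some z) = eps.
  by move=> zC; apply/eqP; rewrite eq_le hxi.1 andbT leNgt hle.
have hq := qdist_ge_sat_chain eps (maximal_chain_sat_chain hC).
move: hsum; rewrite (xiplus_const hconst) => hsum.
(* hsum gives xi None = eps (|C| + 1) <= qdist, against hd. *)
by case: heps => ?; subst eps; lia.
Qed.
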